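(* Consider the (1+1) EA maximizing $\mathrm{LeadingOnes}$ on $\{0,1\}^n$, and let $V_t$ be the $\mathrm{LeadingOnes}$ value of its current search point after $t$ iterations. Then for all $t\le\frac{e-1}{2}n^2-n^{3/2}\log n$, \[ \mathbb{E}[V_t]\ \ge\ \frac{2t}{en}-O(1). \]
   Context: $\mathrm{LeadingOnes}(x)=\sum_{i=1}^n\prod_{j=1}^i x_j$ for $x\in\{0,1\}^n$. The (1+1) EA maximizing $f\colon\{0,1\}^n\to\mathbb{R}$: choose $x\in\{0,1\}^n$ uniformly at random; then repeatedly (one iteration) create $y$ from $x$ by flipping each bit independently with probability $1/n$, and replace $x$ by $y$ if $f(y)\ge f(x)$; the algorithm stops once the optimum is reached (the search point then stays at the optimum). The $O(1)$ term is a constant independent of $n$ and $t$. *)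

From HB Require Import structures.
From mathcomp Require Import all_boot all_order all_algebra.
From mathcomp Require Import all_classical all_reals all_analysis.
Set Implicit Arguments. Unset Strict Implicit. Unset Printing Implicit Defensive.
Import Order.TTheory GRing.Theory Num.Theory.
Local Open Scope ring_scope.

Definition bits (n : nat) := {ffun 'I_n -> bool}.

Definition LeadingOnes (n : nat) (x : bits n) : nat :=
  (\sum_(i < n) \prod_(j < n | (j <= i)%N) nat_of_bool (x j))%N.

Definition hamming (n : nat) (x y : bits n) : nat := #|[set i | x i != y i]|.

Section EA.
Variable R : realType.

(* probability that standard bit mutation (rate 1/n) turns x into y *)
Definition mutProb (n : nat) (x y : bits n) : R :=
  (n%:R^-1) ^+ hamming x y * (1 - n%:R^-1) ^+ (n - hamming x y).

Definition ea_next (n : nat) (x y : bits n) : bits n :=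
  if LeadingOnes x == n then x
  else if (LeadingOnes x <= LeadingOnes y)%N then y else x.

Definition ea_trans (n : nat) (x y : bits n) : R :=
  \sum_(z : bits n) mutProb x z * (ea_next x z == y)%:R.

Fixpoint ea_dist (n : nat) (t : nat) (y : bits n) : R :=
  match t with
  | O => (#|{: bits n}|%:R)^-1
  | t'.+1 => \sum_(x : bits n) @ea_dist n t' x * ea_trans x y
  end.

Definition EV (n t : nat) : R := \sum_(x : bits n) @ea_dist n t x * (LeadingOnes x)%:R.

End EA.

From HB Require Import structures.
From mathcomp Require Import all_boot all_order all_algebra.
From mathcomp Require Import all_classical all_reals all_analysis.
From mathcomp Require Import zify ring lra.
Import Order.TTheory GRing.Theory Num.Theory.
Local Open Scope ring_scope.
Set Implicit Arguments. Unset Strict Implicit. Unset Printing Implicit Defensive.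

(* Write i for the LeadingOnes value of the current point and p = 1/n. An
   iteration gains a level whenever the offspring keeps the first i bits and
   flips bit i, which has probability (1-p)^i p, and it gains a second level if
   moreover bit i+1 of the offspring is 1. Selection never looks beyond bit i,
   so the law of the current point is invariant under flipping bit i+1; hence
   the second level is gained on average half as often as the first. With
   Bernoulli's inequality (1-p)^i >= p (n-i) this gives the drift
   E[V_{t+1}] >= E[V_t] + 3/2 p^2 (n - E[V_t]), so
   n - E[V_t] <= n (1 - 3/(2n^2))^t <= n exp(-3t/(2n^2)), and convexity of exp
   turns this into E[V_t] >= 2t/(en) for t <= (e-1)/2 n^2. Small n are absorbed
   in the constant. *)

Section LeadingOnes.
Variable n : nat.
Implicit Types x : bits n.
Local Notation LO := (@LeadingOnes n).

Lemma sum1_ord_lt k : (k <= n)%N -> (\sum_(i < n | (i < k)%N) 1 = k)%N.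
Proof. by move=> kn; rewrite (big_ord_narrow kn) sum1_card card_ord. Qed.

Lemma LeadingOnesE x : LO x = (\sum_(i < n) [forall j : 'I_n, (j <= i)%N ==> x j])%N.
Proof.
apply: eq_bigr => i _.
case: (boolP [forall j : 'I_n, _]) => [/forallP allx | /forallPn[j]].
  by apply: big1 => j ji; rewrite (implyP (allx j) ji).
by rewrite negb_imply => /andP[ji /negbTE xj]; rewrite (bigD1 j) //= xj.
Qed.

Lemma LeadingOnes_le x : (LO x <= n)%N.
Proof.
rewrite LeadingOnesE -[leqRHS]card_ord -sum1_card.
by apply: leq_sum => i _; apply: leq_b1.
Qed.

Lemma LeadingOnes_ge x k : (k <= n)%N -> (forall j : 'I_n, (j < k)%N -> x j) ->
  (k <= LO x)%N.
Proof.
move=> kn prefix; rewrite LeadingOnesE (bigID (fun i : 'I_n => (i < k)%N)) /=.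
rewrite -[leqLHS](sum1_ord_lt kn) -[leqLHS]addn0 leq_add //.
apply: leq_sum => i ik; rewrite lt0b; apply/forallP => j; apply/implyP => ji.
by apply: prefix; apply: leq_ltn_trans ik.
Qed.

Lemma LeadingOnes_le_zero x (j : 'I_n) : ~~ x j -> (LO x <= j)%N.
Proof.
move=> /negbTE xj; rewrite LeadingOnesE (bigID (fun i : 'I_n => (i < j)%N)) /=.
rewrite [X in (_ + X)%N]big1 ?addn0 => [|i]; last first.
  by rewrite -leqNgt => ji; case: forallP => // /(_ j); rewrite ji xj.
rewrite -[leqRHS](sum1_ord_lt (ltnW (ltn_ord j))).
by apply: leq_sum => i _; apply: leq_b1.
Qed.

Lemma LeadingOnes_prefix x (j : 'I_n) : (j < LO x)%N -> x j.
Proof. by apply: contraTT => /LeadingOnes_le_zero; rewrite leqNgt. Qed.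

Lemma leq_LeadingOnes x k : (k <= n)%N ->
  (k <= LO x)%N = [forall j : 'I_n, (j < k)%N ==> x j].
Proof.
move=> kn; apply/idP/forallP => [le_k j | prefix].
  by apply/implyP => jk; apply: LeadingOnes_prefix; apply: leq_trans le_k.
by apply: LeadingOnes_ge => // j; apply/implyP.
Qed.

Lemma LeadingOnes_zero x (j : 'I_n) : j = LO x :> nat -> ~~ x j.
Proof.
move=> jE; apply/negP => xj.
suff : ((LO x).+1 <= LO x)%N by rewrite ltnn.
apply: LeadingOnes_ge => [|i]; first by rewrite -jE.
rewrite ltnS leq_eqVlt => /orP[/eqP iE | /LeadingOnes_prefix //].
by rewrite (_ : i = j) //; apply: val_inj; rewrite /= iE jE.
Qed.

End LeadingOnes.

Section BitFlip.
Variable n : nat.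
Implicit Types (x z : bits n) (m : {set 'I_n}).
Local Notation LO := (@LeadingOnes n).

Definition bitflip m x : bits n := [ffun j => x j (+) (j \in m)].

Lemma bitflipK m : involutive (bitflip m).
Proof. by move=> x; apply/ffunP => j; rewrite !ffunE addbK. Qed.

Lemma bitflip_inj m : injective (bitflip m).
Proof. exact: inv_inj (bitflipK m). Qed.

Lemma hamming_bitflip m x z : hamming (bitflip m x) (bitflip m z) = hamming x z.
Proof.
by apply: eq_card => j; rewrite !inE !ffunE; case: (x j); case: (z j); case: (j \in m).
Qed.

Lemma leq_LeadingOnes_bitflip m x k : (forall j, j \in m -> (k <= j)%N) ->
  (k <= LO (bitflip m x))%N = (k <= LO x)%N.
Proof.
move=> m_ge; have [kn | lt_nk] := leqP k n; last first.
  have beyond y : (k <= LO y)%N = false.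
    by apply/negbTE; rewrite -ltnNge (leq_ltn_trans (LeadingOnes_le y) lt_nk).
  by rewrite !beyond.
rewrite !leq_LeadingOnes //; apply: eq_forallb => j; rewrite ffunE.
by case: (boolP (j \in m)) => [/m_ge | _]; rewrite ?addbF // leqNgt => /negbTE->.
Qed.

Lemma LeadingOnes_bitflip m x : (forall j, j \in m -> (LO x < j)%N) ->
  LO (bitflip m x) = LO x.
Proof.
move=> m_gt; apply/eqP; rewrite eqn_leq.
rewrite leqNgt leq_LeadingOnes_bitflip ?ltnn //.
by rewrite leq_LeadingOnes_bitflip ?leqnn // => j /m_gt /ltnW.
Qed.

End BitFlip.

Section Mutation.
Variables (R : realType) (n : nat).
Implicit Types (x z : bits n).
Local Notation p := (n%:R^-1 : R).

Definition bitMutProb (b c : bool) : R := if b == c then 1 - p else p.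

Lemma rate_ge0 : 0 <= p.
Proof. by rewrite invr_ge0. Qed.

Lemma rate_le1 : p <= 1.
Proof. by case: n => [|k]; rewrite ?invr0 // invf_le1 ?ler1n. Qed.

Lemma bitMutProb_ge0 b c : 0 <= bitMutProb b c.
Proof. by rewrite /bitMutProb; case: eqP; rewrite ?subr_ge0 ?rate_le1 ?rate_ge0. Qed.

Lemma sum_bitMutProb b : \sum_c bitMutProb b c = 1.
Proof. by rewrite big_bool /bitMutProb; case: b => /=; rewrite ?[p + _]addrC subrK. Qed.

Lemma bitMutProbNT b : bitMutProb b true + bitMutProb (~~ b) true = 1.
Proof. by rewrite -(sum_bitMutProb b) big_bool /bitMutProb; case: b. Qed.

Lemma mutProbE x z : mutProb R x z = \prod_j bitMutProb (x j) (z j).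
Proof.
rewrite /mutProb (bigID (fun j => x j != z j)) /=.
rewrite [\prod_(j | x j != z j) _](eq_bigr (fun=> p)) => [|j /negbTE]; last first.
  by rewrite /bitMutProb => ->.
rewrite [\prod_(j | ~~ (_ != _)) _](eq_bigr (fun=> 1 - p)) => [|j /negPn]; last first.
  by rewrite /bitMutProb => ->.
rewrite !prodr_const /hamming cardsE; congr (_ * _ ^+ _).
rewrite -[X in (X - _)%N](card_ord n) -(cardC (fun j => x j != z j)) addKn.
exact: eq_card.
Qed.

Lemma mutProb_ge0 x z : 0 <= mutProb R x z.
Proof. by rewrite mutProbE; apply: prodr_ge0 => j _; apply: bitMutProb_ge0. Qed.

Lemma sum_mutProb_prod x (Q : 'I_n -> bool -> bool) :
  \sum_z mutProb R x z * \prod_j (Q j (z j))%:R =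
  \prod_j \sum_b bitMutProb (x j) b * (Q j b)%:R.
Proof. by rewrite bigA_distr_bigA; apply: eq_bigr => z _; rewrite mutProbE big_split. Qed.

Lemma sum_mutProb x : \sum_z mutProb R x z = 1.
Proof.
transitivity (\sum_z mutProb R x z * \prod_(j < n) (true : nat)%:R).
  by apply: eq_bigr => z _; rewrite big1 ?mulr1.
rewrite (sum_mutProb_prod x (fun _ _ => true)); apply: big1 => j _.
by under eq_bigr do rewrite mulr1; apply: sum_bitMutProb.
Qed.

End Mutation.

Section Chain.
Variables (R : realType) (n : nat).
Implicit Types (x y z : bits n).
Local Notation LO := (@LeadingOnes n).
Local Notation dist t := (@ea_dist R n t).

Lemma ea_distS t y : dist t.+1 y = \sum_x dist t x * ea_trans R x y.
Proof. by []. Qed.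

Lemma ea_trans_ge0 x y : 0 <= ea_trans R x y.
Proof. by apply: sumr_ge0 => z _; rewrite mulr_ge0 ?mutProb_ge0. Qed.

Lemma sum_ea_trans x (G : bits n -> R) :
  \sum_y ea_trans R x y * G y = \sum_z mutProb R x z * G (ea_next x z).
Proof.
under eq_bigr do rewrite mulr_suml.
rewrite exchange_big; apply: eq_bigr => z _.
rewrite (bigD1 (ea_next x z)) //= eqxx mulr1 big1 ?addr0 // => y /negbTE.
by rewrite eq_sym => ->; rewrite mulr0 mul0r.
Qed.

Lemma sum_ea_trans1 x : \sum_y ea_trans R x y = 1.
Proof.
transitivity (\sum_y ea_trans R x y * 1); first by apply: eq_bigr => y _; rewrite mulr1.
by rewrite sum_ea_trans; under eq_bigr do rewrite mulr1; apply: sum_mutProb.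
Qed.

Lemma ea_dist_ge0 t x : 0 <= dist t x.
Proof.
elim: t x => [|t IH] x /=; first by rewrite invr_ge0.
by apply: sumr_ge0 => y _; rewrite mulr_ge0 ?ea_trans_ge0.
Qed.

Lemma sum_ea_dist t : \sum_x dist t x = 1.
Proof.
elim: t => [|t IH] /=.
  rewrite sumr_const -[_ *+ _]mulr_natl mulfV // pnatr_eq0 -lt0n.
  by rewrite card_ffun card_bool card_ord expn_gt0.
rewrite exchange_big -[RHS]IH; apply: eq_bigr => x _.
by rewrite -mulr_sumr sum_ea_trans1 mulr1.
Qed.

Lemma EV_ge0 t : 0 <= EV R n t.
Proof. by apply: sumr_ge0 => x _; rewrite mulr_ge0 ?ea_dist_ge0. Qed.

Lemma EV_succ t :
  EV R n t.+1 = \sum_x dist t x * \sum_z mutProb R x z * (LO (ea_next x z))%:R.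
Proof.
rewrite /EV; under eq_bigr do rewrite ea_distS mulr_suml.
rewrite exchange_big; apply: eq_bigr => x _.
rewrite -(sum_ea_trans x (fun y => (LO y)%:R)) mulr_sumr.
by under [RHS]eq_bigr do rewrite mulrA.
Qed.

End Chain.

Section Symmetry.
Variables (R : realType) (n : nat).
Implicit Types (x y z : bits n) (m : {set 'I_n}).
Local Notation LO := (@LeadingOnes n).

Lemma LeadingOnes_ea_next_ge x z : (LO x <= LO (ea_next x z))%N.
Proof. by rewrite /ea_next; case: ifP => _ //; case: ifP. Qed.

Lemma ea_trans_eq0 x y : (LO y < LO x)%N -> ea_trans R x y = 0.
Proof.
move=> lt_yx; apply: big1 => z _; case: eqP => [nextE | _]; last by rewrite mulr0.
by have := LeadingOnes_ea_next_ge x z; rewrite nextE leqNgt lt_yx.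
Qed.

(* Selection only compares leading-ones prefixes and mutation is invariant
   under flipping fixed positions, so flipping bits beyond the prefix commutes
   with every step of the algorithm. *)
Section Invariance.
Variables (m : {set 'I_n}) (x : bits n).
Hypothesis m_gt : forall j, j \in m -> (LO x < j)%N.

Lemma ea_next_bitflip z : ea_next (bitflip m x) (bitflip m z) = bitflip m (ea_next x z).
Proof.
rewrite /ea_next (LeadingOnes_bitflip m_gt).
rewrite leq_LeadingOnes_bitflip => [|j /m_gt/ltnW //].
by case: ifP => _ //; case: ifP.
Qed.

Lemma ea_trans_bitflip y : ea_trans R (bitflip m x) (bitflip m y) = ea_trans R x y.
Proof.
rewrite /ea_trans (reindex_inj (@bitflip_inj n m)); apply: eq_bigr => z _.
by rewrite /mutProb hamming_bitflip ea_next_bitflip (inj_eq (@bitflip_inj n m)).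
Qed.

End Invariance.

Lemma ea_dist_bitflip t m x : (forall j, j \in m -> (LO x < j)%N) ->
  ea_dist R t (bitflip m x) = ea_dist R t x.
Proof.
elim: t x => [//| t IH] y m_gt.
rewrite !ea_distS (reindex_inj (@bitflip_inj n m)); apply: eq_bigr => x _.
have [le_xy | lt_yx] := leqP (LO x) (LO y).
  have m_gtx j : j \in m -> (LO x < j)%N by move/m_gt; apply: leq_ltn_trans.
  by rewrite IH // ea_trans_bitflip.
rewrite !ea_trans_eq0 ?mulr0 // (LeadingOnes_bitflip m_gt).
by rewrite leq_LeadingOnes_bitflip.
Qed.

End Symmetry.

Lemma prodr_indicator (R : pzSemiRingType) (I : finType) (b : pred I) :
  \prod_i (b i : nat)%:R = ([forall i, b i] : nat)%:R :> R.
Proof.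
rewrite -natr_prod; congr _%:R.
case: (boolP [forall i, b i]) => [/forallP all_b | /forallPn[i /negbTE bi]].
  by apply: big1 => i _; rewrite all_b.
by rewrite (bigD1 i) //= bi.
Qed.

Section ReachProbability.
Variables (R : realType) (n : nat).
Implicit Types (x y z : bits n).
Local Notation LO := (@LeadingOnes n).
Local Notation p := (n%:R^-1 : R).
Local Notation bitMutProb := (bitMutProb R n).

Definition reachProb x k : R := \sum_z mutProb R x z * (k <= LO z)%:R.

Lemma reachProb_eq0 x k : (n < k)%N -> reachProb x k = 0.
Proof.
move=> lt_nk; apply: big1 => z _.
by rewrite leqNgt (leq_ltn_trans (LeadingOnes_le z) lt_nk) mulr0.
Qed.

Lemma reachProbE x k : (k <= n)%N ->
  reachProb x k = \prod_j \sum_b bitMutProb (x j) b * ((j < k)%N ==> b)%:R.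
Proof.
move=> kn; rewrite -sum_mutProb_prod; apply: eq_bigr => z _.
by rewrite prodr_indicator leq_LeadingOnes.
Qed.

Lemma reachProb_next x : (LO x < n)%N -> reachProb x (LO x).+1 = (1 - p) ^+ LO x * p.
Proof.
move=> lt_xn; rewrite reachProbE //; set i := LO x; pose j0 : 'I_n := Ordinal lt_xn.
rewrite (eq_bigr (fun j : 'I_n =>
  (if (j < i)%N then 1 - p else 1) * (if j == j0 then p else 1))).
  rewrite big_split /= -!big_mkcond (big_ord_narrow (ltnW lt_xn)) prodr_const card_ord.
  by rewrite big_pred1_eq.
move=> j _; rewrite big_bool /= ltnS.
have [lt_ji | lt_ij | ji] := ltngtP j i;
  rewrite /= ?mulr1n ?mulr0n ?mulr1 ?mulr0 ?addr0 ?mul1r.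
- have /negbTE-> : j != j0 by apply: contraTneq lt_ji => ->; rewrite ltnn.
  by rewrite LeadingOnes_prefix // mulr1.
- have /negbTE-> : j != j0 by apply: contraTneq lt_ij => ->; rewrite ltnn.
  by rewrite -big_bool sum_bitMutProb.
- have -> : j = j0 by apply: val_inj.
  by rewrite eqxx (negbTE (LeadingOnes_zero _)).
Qed.

End ReachProbability.

Section FreeBit.
Variables (R : realType) (n : nat).
Implicit Types (x : bits n).
Local Notation LO := (@LeadingOnes n).
Local Notation bitMutProb := (bitMutProb R n).
Local Notation reachProb := (@reachProb R n).

Definition flip_free x : bits n := bitflip [set j : 'I_n | j == (LO x).+1 :> nat] x.

Lemma flip_free_beyond x j : j \in [set j : 'I_n | j == (LO x).+1 :> nat] -> (LO x < j)%N.
Proof. by rewrite inE => /eqP->. Qed.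

Lemma LeadingOnes_flip_free x : LO (flip_free x) = LO x.
Proof. exact: LeadingOnes_bitflip (@flip_free_beyond x). Qed.

Lemma flip_freeK : involutive flip_free.
Proof. by move=> x; rewrite {1}/flip_free LeadingOnes_flip_free bitflipK. Qed.

Lemma ea_dist_flip_free t x : ea_dist R t (flip_free x) = ea_dist R t x.
Proof. exact: ea_dist_bitflip (@flip_free_beyond x). Qed.

Lemma reachProb_flip_free x : ((LO x).+2 <= n)%N ->
  reachProb x (LO x).+2 + reachProb (flip_free x) (LO x).+2 = reachProb x (LO x).+1.
Proof.
move=> lt_xn; set i := LO x; pose j0 : 'I_n := Ordinal lt_xn.
have ne_j0 j : j != j0 -> (j == i.+1 :> nat) = false.
  by apply: contraNF => /eqP ji; apply/eqP/val_inj.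
have flip_j0 : flip_free x j0 = ~~ x j0 by rewrite ffunE inE eqxx addbT.
have flip_j j : j != j0 -> flip_free x j = x j.
  by move=> /ne_j0 ne; rewrite ffunE inE ne addbF.
have ltS_j j : j != j0 -> (j < i.+2)%N = (j < i.+1)%N.
  by move=> /ne_j0 ne; rewrite ltnS leq_eqVlt ne.
rewrite !reachProbE ?(ltnW lt_xn) //.
rewrite [X in X + _ = _](bigD1 j0) // [X in _ + X = _](bigD1 j0) // [RHS](bigD1 j0) //=.
rewrite ltnn ltnSn flip_j0 /=.
rewrite !big_bool /= ?mulr1n ?mulr0n ?mulr1 ?mulr0 ?addr0 -big_bool sum_bitMutProb mul1r.
have restE (y : bits n) : (forall j, j != j0 -> y j = x j) ->
    \prod_(j | j != j0) \sum_b bitMutProb (y j) b * ((j < i.+2)%N ==> b)%:R =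
    \prod_(j | j != j0) \sum_b bitMutProb (x j) b * ((j < i.+1)%N ==> b)%:R.
  by move=> yE; apply: eq_bigr => j ne; rewrite yE // ltS_j.
by rewrite (restE x) // (restE _ flip_j) -mulrDl bitMutProbNT mul1r.
Qed.

End FreeBit.

Section Drift.
Variables (R : realType) (n : nat).
Implicit Types (x z : bits n).
Local Notation LO := (@LeadingOnes n).
Local Notation dist t := (@ea_dist R n t).
Local Notation reachProb := (@reachProb R n).

Lemma LeadingOnes_ea_next_gain x z :
  (LO x + ((LO x).+1 <= LO z) + ((LO x).+2 <= LO z) <= LO (ea_next x z))%N.
Proof.
have := LeadingOnes_le z; rewrite /ea_next.
case: ifP => [/eqP-> | _]; last case: ifP; lia.
Qed.

Lemma EV_succ_ge t :
  EV R n t + \sum_x dist t x * (reachProb x (LO x).+1 + reachProb x (LO x).+2) <= EV R n t.+1.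
Proof.
rewrite EV_succ /EV -big_split; apply: ler_sum => x _ /=.
rewrite -mulrDr ler_wpM2l ?ea_dist_ge0 //.
have -> : (LO x)%:R = \sum_z mutProb R x z * (LO x)%:R :> R.
  by rewrite -mulr_suml sum_mutProb mul1r.
rewrite /reachProb -!big_split /=.
apply: ler_sum => z _; rewrite -!mulrDr ler_wpM2l ?mutProb_ge0 //.
by rewrite -!natrD ler_nat addnA LeadingOnes_ea_next_gain.
Qed.

(* Pairing x with flip_free x shows that, given the prefix, the bit after the
   first zero is a fair coin. *)
Lemma sum_reachProb_two t :
  \sum_x dist t x * reachProb x (LO x).+2 =
  2^-1 * \sum_x dist t x * (((LO x).+2 <= n)%N%:R * reachProb x (LO x).+1).
Proof.
set S := LHS.
have S_flip : S = \sum_x dist t x * reachProb (flip_free x) (LO x).+2.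
  rewrite /S (reindex_inj (can_inj (@flip_freeK n))); apply: eq_bigr => x _.
  by rewrite ea_dist_flip_free LeadingOnes_flip_free.
suff <- : S + S = \sum_x dist t x * (((LO x).+2 <= n)%N%:R * reachProb x (LO x).+1).
  by field.
rewrite {2}S_flip /S -big_split /=; apply: eq_bigr => x _; rewrite -mulrDr.
have [le_xn | lt_nx] := leqP (LO x).+2 n; first by rewrite mul1r reachProb_flip_free.
by rewrite !(reachProb_eq0 _ _ lt_nx) mul0r addr0.
Qed.

End Drift.

Section Numeric.
Variable R : realType.

Lemma bernoulli_ineq (a : R) k : a <= 1 -> 1 - k%:R * a <= (1 - a) ^+ k.
Proof.
move=> a_le1; elim: k => [|k IH]; first by rewrite mul0r subr0.
rewrite exprS -[k.+1]addn1 natrD.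
apply: le_trans (ler_wpM2l _ IH); last by rewrite subr_ge0.
by have := mulr_ge0 (ler0n R k) (sqr_ge0 a); nra.
Qed.

Lemma expR_convex01 (l u : R) : 0 <= l -> l <= 1 -> expR (l * u) <= l * expR u + (1 - l).
Proof.
move=> l0 l1; have := convex_expR (Itv01 l0 l1) u 0.
by rewrite !convRE /= expR0 mulr0 mulr1 addr0.
Qed.

Lemma expRN1_ge : 4^-1 <= expR (-1) :> R.
Proof.
have half_le : 2^-1 <= expR (- 2^-1) :> R by apply: le_trans (expR_ge1Dx _); lra.
rewrite (_ : -1 = 2%:R * - 2^-1); last by field.
by rewrite expRM_natl expr2; nra.
Qed.

Lemma expR1_ge : 7 / 3 <= expR 1 :> R.
Proof.
have quarter_ge : 5 / 4 <= expR 4^-1 :> R by apply: le_trans (expR_ge1Dx _); lra.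
rewrite (_ : 1 = 4%:R * 4^-1); last by field.
rewrite expRM_natl; apply: le_trans (_ : (5 / 4) ^+ 4 <= _).
  by rewrite !exprS expr0; lra.
by apply: lerXn2r; rewrite ?nnegrE ?expR_ge0 //; lra.
Qed.

Lemma expRN1_le_pow m : expR (-1) <= (1 - m.+1%:R^-1) ^+ m :> R.
Proof.
case: m => [|m]; first by rewrite expr0 expR_le1 lerN10.
have m_gt0 : 0 < m.+1%:R :> R by rewrite ltr0n.
have inv_ge0 : 0 <= m.+1%:R^-1 :> R by rewrite invr_ge0 ltW.
rewrite (_ : -1 = m.+1%:R * - m.+1%:R^-1); last by field; lra.
have -> : 1 - m.+2%:R^-1 = (1 + m.+1%:R^-1)^-1 :> R.
  by rewrite -[m.+2]addn1 natrD; field; apply/andP; split; lra.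
rewrite expRM_natl; apply: lerXn2r; rewrite ?nnegrE ?expR_ge0 ?invr_ge0 //.
by rewrite expRN lef_pV2 ?posrE ?expR_gt0 ?expR_ge1Dx //; lra.
Qed.

Lemma expR_le_chord (tau : R) : 0 <= tau -> tau <= (expR 1 - 1) / 2 ->
  expR (- (3 / 2) * tau) <= 1 - 2 * tau / expR 1.
Proof.
move=> tau_ge0 tau_le; have e_ge := expR1_ge.
set e := expR 1 in tau_le e_ge *; set T := (e - 1) / 2 in tau_le.
have T_gt0 : 0 < T by rewrite /T; lra.
set l := tau / T.
have l_ge0 : 0 <= l by rewrite divr_ge0 // ltW.
have l_le1 : l <= 1 by rewrite ler_pdivrMr // mul1r.
rewrite (_ : - (3 / 2) * tau = l * (- (3 / 2) * T)); last by rewrite /l; field; lra.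
apply: le_trans (expR_convex01 _ l_ge0 l_le1) _.
have endpoint : expR (- (3 / 2) * T) <= e^-1 by rewrite -expRN ler_expR /T; lra.
have -> : 1 - 2 * tau / e = 1 - l * (1 - e^-1).
  by rewrite /l /T; field; apply/andP; split; lra.
by have := ler_wpM2l l_ge0 endpoint; lra.
Qed.

End Numeric.

Section Progress.
Variables (R : realType) (n : nat).
Hypothesis n_ge6 : (6 <= n)%N.
Implicit Types (x : bits n).
Local Notation LO := (@LeadingOnes n).
Local Notation p := (n%:R^-1 : R).
Local Notation dist t := (@ea_dist R n t).
Local Notation reachProb := (@reachProb R n).

Let n_gt0 : (0 < n)%N. Proof. exact: leq_trans n_ge6. Qed.
Let n_neq0 : n%:R != 0 :> R. Proof. by rewrite pnatr_eq0 -lt0n. Qed.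
Let rate_gt0 : 0 < p. Proof. by rewrite invr_gt0 ltr0n. Qed.
Let rate_le : p <= 6^-1. Proof. by rewrite lef_pV2 ?posrE ?ltr0n // ler_nat. Qed.

(* At LO x = n - 1 Bernoulli's inequality is too weak; there we use
   (1 - 1/n)^(n-1) >= 1/e >= 1/4 >= 3/(2n), which needs n >= 6. *)
Lemma reachProb_gain x :
  3 / 2 * p ^+ 2 * (n%:R - (LO x)%:R) <=
  reachProb x (LO x).+1 + 2^-1 * (((LO x).+2 <= n)%N%:R * reachProb x (LO x).+1).
Proof.
have [lt_xn | lt_nx | ->] := ltngtP (LO x) n; last first.
- by rewrite subrr mulr0 reachProb_eq0 // mulr0 addr0.
- by have := LeadingOnes_le x; rewrite leqNgt lt_nx.
rewrite reachProb_next //; set i := LO x in lt_xn *.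
have [le_in | lt_ni] := leqP i.+2 n; rewrite /= ?mul1r ?mul0r ?addr0.
  have : p * (n%:R - i%:R) <= (1 - p) ^+ i.
    by apply: le_trans (bernoulli_ineq _ (rate_le1 R n)); rewrite mulrBr mulVf // mulrC.
  by move=> /(ler_wpM2l (ltW rate_gt0)); nra.
have nE : n = i.+1 by lia.
have pow_ge : 4^-1 <= (1 - p) ^+ i.
  by rewrite nE; apply: le_trans (expRN1_ge R) (expRN1_le_pow R i).
have gap1 : n%:R - i%:R = 1 :> R by rewrite nE -addn1 natrD addrAC subrr add0r.
have rate_le_pow : 3 / 2 * p <= (1 - p) ^+ i.
  by apply: le_trans pow_ge; have := rate_le; lra.
by rewrite gap1 mulr0 addr0 mulr1 expr2 mulrA ler_pM2r.
Qed.

Lemma EV_succ_gap t : EV R n t + 3 / 2 * p ^+ 2 * (n%:R - EV R n t) <= EV R n t.+1.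
Proof.
apply: le_trans (EV_succ_ge R n t); rewrite lerD2l.
under eq_bigr do rewrite mulrDr.
rewrite big_split /= sum_reachProb_two mulr_sumr -big_split /=.
have -> : n%:R - EV R n t = \sum_x (dist t x * n%:R - dist t x * (LO x)%:R).
  by rewrite sumrB -mulr_suml sum_ea_dist mul1r.
rewrite mulr_sumr; apply: ler_sum => x _.
rewrite -mulrBr mulrCA [X in _ <= _ + X]mulrCA -mulrDr ler_wpM2l ?ea_dist_ge0 //.
exact: reachProb_gain.
Qed.

Lemma gap_EV_le t : n%:R - EV R n t <= (1 - 3 / 2 * p ^+ 2) ^+ t * n%:R.
Proof.
have factor_ge0 : 0 <= 1 - 3 / 2 * p ^+ 2 by have := rate_le; have := rate_gt0; nra.
elim: t => [|t IH]; first by rewrite expr0 mul1r gerBl EV_ge0.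
apply: le_trans (_ : (1 - 3 / 2 * p ^+ 2) * (n%:R - EV R n t) <= _).
  by have := EV_succ_gap t; lra.
rewrite [_ ^+ t.+1]exprS -[leRHS]mulrA; exact: (ler_wpM2l factor_ge0 IH).
Qed.

Lemma EV_ge_linear t : (t%:R : R) <= (expR 1 - 1) / 2 * n%:R ^+ 2 ->
  2 * t%:R / (expR 1 * n%:R) <= EV R n t.
Proof.
move=> t_le; have e_gt0 := expR_gt0 (1 : R).
have n_pos : 0 < n%:R :> R by rewrite ltr0n.
set tau := t%:R * p ^+ 2.
have tau_ge0 : 0 <= tau by rewrite mulr_ge0 ?sqr_ge0.
have tau_le : tau <= (expR 1 - 1) / 2.
  have nMp : n%:R ^+ 2 * p ^+ 2 = 1 by rewrite -exprMn mulfV // expr1n.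
  by have := ler_wpM2r (sqr_ge0 p) t_le; rewrite -[_ / 2 * _ * _]mulrA nMp mulr1.
have decay : (1 - 3 / 2 * p ^+ 2) ^+ t <= expR (- (3 / 2) * tau).
  rewrite (_ : - (3 / 2) * tau = - (3 / 2 * p ^+ 2) * t%:R); last by rewrite /tau; ring.
  rewrite expRM_natr; apply: lerXn2r; rewrite ?nnegrE ?expR_ge0 ?expR_ge1Dx //.
  by have := rate_le; have := rate_gt0; nra.
have -> : 2 * t%:R / (expR 1 * n%:R) = n%:R * (2 * tau / expR 1).
  by rewrite /tau; field; apply/andP; split; lra.
have := ler_wpM2r (ltW n_pos) decay; have := gap_EV_le t.
have := ler_wpM2l (ltW n_pos) (expR_le_chord tau_ge0 tau_le).
lra.
Qed.

End Progress.

Theorem theorem11 (R : realType) :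
  exists C : R, forall n t : nat, (1 <= n)%N ->
    (t%:R : R) <= (expR 1 - 1) / 2 * n%:R ^+ 2 - n%:R * Num.sqrt (n%:R) * ln (n%:R) ->
    (2 * t%:R : R) / (expR 1 * n%:R) - C <= EV R n t.
Proof.
exists 6 => n t n_ge1 t_le.
have t_le' : t%:R <= (expR 1 - 1) / 2 * n%:R ^+ 2 :> R.
  have : 0 <= n%:R * Num.sqrt n%:R * ln n%:R :> R.
    by rewrite !mulr_ge0 ?sqrtr_ge0 ?ln_ge0 ?ler1n.
  lra.
have [n_ge6 | n_lt6] := leqP 6 n; first by have := EV_ge_linear n_ge6 t_le'; lra.
have n_gt0 : 0 < n%:R :> R by rewrite ltr0n.
have line_le_n : 2 * t%:R / (expR 1 * n%:R) <= n%:R :> R.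
  rewrite ler_pdivrMr ?mulr_gt0 ?expR_gt0 //.
  by have := expR_gt0 (1 : R); rewrite expr2 in t_le'; nra.
have : n%:R <= 6 :> R by rewrite ler_nat ltnW.
by have := EV_ge0 R n t; lra.
Qed.
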